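(* For every $s>0$ let $\sigma_s$ be a Borel probability measure on $\mathbb S^{N-1}$ and let $e_s\in\mathbb S^{N-1}$ be a maximum point of $M_{s,\sigma_s}$. Then $$\liminf_{s\to+\infty}\int_{\mathbb S^{N-1}}|e_s\cdot\theta|^{2s}\sigma_s(d\theta)>0\quad\Longleftrightarrow\quad\inf_{s>0}\int_{\mathbb S^{N-1}}|e_s\cdot\theta|^{2s}\sigma_s(d\theta)>0.$$
   Context: For a Borel probability measure $\sigma$ on $\mathbb S^{N-1}$, $s\ge0$ and $e\in\mathbb S^{N-1}$, $M_{s,\sigma}(e)=\int_{\mathbb S^{N-1}}|e\cdot\theta|^{2s}\sigma(d\theta)$. *)

From HB Require Import structures.
From mathcomp Require Import all_boot all_order all_algebra.
From mathcomp Require Import all_classical all_reals all_analysis.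
Set Implicit Arguments. Unset Strict Implicit. Unset Printing Implicit Defensive.
Import Order.TTheory GRing.Theory Num.Theory.
Import numFieldNormedType.Exports.
Local Open Scope classical_set_scope.
Local Open Scope ring_scope.

Definition borelRN (R : realType) (N : nat) :=
  g_sigma_algebraType (@open 'rV[R]_N).

Definition dotv (R : realType) (N : nat) (x y : 'rV[R]_N) : R :=
  \sum_(i < N) x ord0 i * y ord0 i.

Definition sphere (R : realType) (N : nat) : set 'rV[R]_N :=
  [set x | dotv x x = 1].
Arguments sphere : clear implicits.

(* A Borel probability measure on S^{N-1} is represented as a Borel
   probability measure on R^N giving full mass to S^{N-1}. *)
Definition supported_on_sphere (R : realType) (N : nat)
  (sigma : probability (borelRN R N) R) : Prop :=
  sigma (~` (sphere R N : set (borelRN R N))) = 0%E.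

Definition Msigma (R : realType) (N : nat) (s : R)
  (sigma : probability (borelRN R N) R) (e : 'rV[R]_N) : \bar R :=
  (\int[sigma]_(t in (sphere R N : set (borelRN R N)))
      (`|dotv e t| `^ (2 * s))%:E)%E.

From HB Require Import structures.
From mathcomp Require Import all_boot all_order all_algebra.
From mathcomp Require Import all_classical all_reals all_analysis.
From mathcomp Require Import measurable_realfun.
Import Order.TTheory GRing.Theory Num.Theory.
Import numFieldNormedType.Exports.
Set Implicit Arguments. Unset Strict Implicit. Unset Printing Implicit Defensive.
Local Open Scope classical_set_scope.
Local Open Scope ring_scope.

(* Since {s | s > 0} is a neighbourhood of +oo, the infimum is at most the
   liminf.  Conversely, the value at a maximiser e_s dominates the average of
   the values at the N coordinate vectors, i.e. (1/N) times the integral of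
   sum_i |theta_i|^{2s}; on the sphere some theta_i^2 is at least 1/N, so that
   integrand is at least N^{-s}.  Hence M_s(e_s) >= N^{-s-1}, a bound uniform on
   every range 0 < s <= S, while a positive liminf bounds s > S. *)

Section Liminf_at_pinfty.
Variable R : realType.
Implicit Types f : R -> \bar R.

Lemma ereal_inf_pos_le_limf_einf f :
  (ereal_inf (f @` [set s : R | (0 < s)%R]) <= limf_einf f (pinfty_nbhs R))%E.
Proof.
rewrite limf_einfE; apply: ereal_sup_ubound; exists [set s : R | 0 < s] => //.
by exists 0; split => // s.
Qed.

Lemma limf_einf_gt0_ereal_inf_pos_gt0 f :
  (forall S, exists2 b : R, 0 < b & forall s, 0 < s <= S -> (b%:E <= f s)%E) ->
  (0 < limf_einf f (pinfty_nbhs R))%E ->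
  (0 < ereal_inf (f @` [set s : R | (0 < s)%R]))%E.
Proof.
move=> bounded_below; rewrite limf_einfE.
move=> /ereal_sup_gt [_ [V [M [_ VM]] <-] infV_gt0].
have [b b_gt0 fb] := bounded_below M.
apply: (@lt_le_trans _ _ (Order.min (ereal_inf (f @` V)) b%:E)).
  by rewrite lt_min infV_gt0 lte_fin b_gt0.
apply: le_ereal_inf_tmp => _ [s s_gt0 <-]; rewrite ge_min.
have [Ms|sM] := ltP M s.
  by rewrite ereal_inf_lbound //; exists s => //; exact: VM.
by rewrite fb ?orbT // s_gt0.
Qed.

End Liminf_at_pinfty.

Section Sphere.
Variables (R : realType) (N : nat).

Lemma measurable_coord (i : 'I_N) :
  measurable_fun (setT : set (borelRN R N)) (fun x : 'rV[R]_N => x ord0 i).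
Proof.
apply: (measurability _ (RGenOpens.measurableE R)).
move=> _ [_ [a [b ->] <-]]; apply: measurableI => //.
apply: sub_sigma_algebra.
by move: (@coord_continuous R 1 N ord0 i) => /continuousP; apply; exact: interval_open.
Qed.

Lemma measurable_coord_powR (i : 'I_N) (p : R) :
  measurable_fun (setT : set (borelRN R N)) (fun t : 'rV[R]_N => `|t ord0 i| `^ p).
Proof.
apply: (measurableT_comp (measurable_powR p)).
exact: (measurableT_comp (@normr_measurable R setT) (measurable_coord i)).
Qed.

Lemma measurable_sphere : measurable (sphere R N : set (borelRN R N)).
Proof.
have mdot : measurable_fun (setT : set (borelRN R N)) (fun t : 'rV[R]_N => dotv t t).
  by apply: measurable_sum => i; apply: measurable_funM; exact: measurable_coord.
by rewrite -[sphere R N]setTI; exact: (mdot measurableT _ (measurable_set1 1)).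
Qed.

Lemma supported_on_sphereE (sigma : probability (borelRN R N) R) :
  supported_on_sphere sigma -> sigma (sphere R N : set (borelRN R N)) = 1%E.
Proof.
move=> supp; have := probability_setC sigma (measurableC measurable_sphere).
by rewrite setCK supp sube0.
Qed.

Lemma dotv_delta (i : 'I_N) (t : 'rV[R]_N) : dotv (delta_mx ord0 i) t = t ord0 i.
Proof.
rewrite /dotv (bigD1 i) //= big1 => [|j ji]; rewrite !mxE.
  by rewrite !eqxx mul1r addr0.
by rewrite eqxx (negbTE ji) mul0r.
Qed.

Lemma sphere_delta (i : 'I_N) : sphere R N (delta_mx ord0 i).
Proof. by rewrite /sphere /= dotv_delta mxE !eqxx. Qed.

Lemma sphere_dim_gt0 (x : 'rV[R]_N) : sphere R N x -> (0 < N)%N.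
Proof.
rewrite /sphere /dotv /=; case: N x => [|n] // x.
by rewrite big_ord0 => /eqP; rewrite eq_sym oner_eq0.
Qed.

Lemma sphere_exists_coord_sqr_ge (t : 'rV[R]_N) :
  sphere R N t -> exists i : 'I_N, N%:R^-1 <= t ord0 i ^+ 2.
Proof.
move=> St; have N_gt0 := sphere_dim_gt0 St.
apply: contrapT => /forallNP small.
have : \sum_(i < N) t ord0 i * t ord0 i < \sum_(i < N) N%:R^-1 :> R.
  apply: ltr_sum => [|i _]; last by rewrite -expr2 ltNge; apply/negP; exact: small.
  by apply/hasP; exists (Ordinal N_gt0); rewrite ?mem_index_enum.
rewrite sumr_const card_ord -[X in _ < X]mulr_natr mulVf ?pnatr_eq0 -?lt0n //.
by move: St; rewrite /sphere /dotv /= => ->; rewrite ltxx.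
Qed.

Lemma sphere_sum_coord_powR_ge (t : 'rV[R]_N) (s : R) : 0 < s -> sphere R N t ->
  N%:R^-1 `^ s <= \sum_(i < N) `|t ord0 i| `^ (2 * s).
Proof.
move=> s_gt0 St; have [i ti] := sphere_exists_coord_sqr_ge St.
rewrite (bigD1 i) //=; apply: (@le_trans _ _ (`|t ord0 i| `^ (2 * s))); last first.
  by rewrite lerDl; apply: sumr_ge0 => j _; exact: powR_ge0.
rewrite powRrM (@powR_mulrn R _ 2) // -normrX ger0_norm ?sqr_ge0 //.
apply: ge0_ler_powR => //; first exact: ltW.
  by rewrite nnegrE invr_ge0.
by rewrite nnegrE sqr_ge0.
Qed.

Variables (sigma : probability (borelRN R N) R) (s : R).
Hypotheses (supp : supported_on_sphere sigma) (s_gt0 : 0 < s).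

Lemma Msigma_ge0 (x : 'rV[R]_N) : (0 <= Msigma s sigma x)%E.
Proof. by apply: integral_ge0 => t _; rewrite lee_fin powR_ge0. Qed.

Lemma sum_Msigma_delta_ge :
  ((N%:R^-1 `^ s)%:E <= \sum_(i < N) Msigma s sigma (delta_mx ord0 i))%E.
Proof.
have mS := measurable_sphere.
rewrite /Msigma; under eq_bigr do under eq_integral do rewrite dotv_delta.
rewrite -ge0_integral_sum //; last first.
  by move=> i; apply/measurable_EFinP/measurable_funTS; exact: measurable_coord_powR.
under eq_integral do rewrite sumEFin.
apply: (@le_trans _ _
  (\int[sigma]_(t in (sphere R N : set (borelRN R N))) (N%:R^-1 `^ s)%:E)%E).
  rewrite integral_cst // -[X in (_ <= _ * X)%E]/(sigma (sphere R N : set (borelRN R N))).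
  by rewrite supported_on_sphereE // mule1.
apply: ge0_le_integral => //.
- apply/measurable_EFinP/measurable_funTS.
  by apply: measurable_sum => i; exact: measurable_coord_powR.
- by move=> t St; rewrite lee_fin; exact: sphere_sum_coord_powR_ge.
Qed.

Lemma Msigma_argmax_ge (e : 'rV[R]_N) : (0 < N)%N ->
  (forall x, sphere R N x -> (Msigma s sigma x <= Msigma s sigma e)%E) ->
  ((N%:R^-1 `^ s / N%:R)%:E <= Msigma s sigma e)%E.
Proof.
move=> N_gt0 e_max.
have : (\sum_(i < N) Msigma s sigma (delta_mx ord0 i)
         <= \sum_(i < N) Msigma s sigma e)%E.
  by apply: lee_sum => i _; exact/e_max/sphere_delta.
move=> /(le_trans sum_Msigma_delta_ge); move: (Msigma_ge0 e).
case: (Msigma s sigma e) => [r _| _ _|] //; last exact: leey.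
rewrite sumEFin lee_fin sumr_const card_ord => le_r.
by rewrite lee_fin ler_pdivrMr ?ltr0n // mulr_natr.
Qed.

End Sphere.

Theorem lemma2p2 (R : realType) (N : nat)
  (sigma : R -> probability (borelRN R N) R) (e : R -> 'rV[R]_N) :
  (forall s : R, 0 < s -> supported_on_sphere (sigma s)) ->
  (forall s : R, 0 < s -> sphere R N (e s)) ->
  (forall s : R, 0 < s -> forall x : 'rV[R]_N, sphere R N x ->
     (Msigma s (sigma s) x <= Msigma s (sigma s) (e s))%E) ->
  ((0 < limf_einf (fun s : R => Msigma s (sigma s) (e s)) (pinfty_nbhs R))%E
   <->
   (0 < ereal_inf [set Msigma s (sigma s) (e s) | s in [set s : R | (0 < s)%R]])%E).
Proof.
move=> supp e_sphere e_max.
have N_gt0 : (0 < N)%N := sphere_dim_gt0 (e_sphere 1 ltr01).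
have invN_01 : 0 < (N%:R^-1 : R) <= 1.
  by rewrite invr_gt0 ltr0n N_gt0 invf_le1 ?ltr0n // ler1n.
split; last by move/lt_le_trans; apply; exact: ereal_inf_pos_le_limf_einf.
apply: limf_einf_gt0_ereal_inf_pos_gt0 => S.
exists (N%:R^-1 `^ S / N%:R) => [|s /andP[s_gt0 sS]].
  by rewrite divr_gt0 // ?ltr0n // powR_gt0 //; case/andP: invN_01.
apply: le_trans (Msigma_argmax_ge (supp s s_gt0) s_gt0 N_gt0 (e_max s s_gt0)).
by rewrite lee_fin ler_wpM2r ?invr_ge0 ?ler0n //; exact: ger_powR.
Qed.
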